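(* For real $p\neq 0$, the inequality $\frac{2}{3}\left( \frac{\sinh x}{x}\right) ^{p}+\frac{1}{3}\left( \frac{\tanh x}{x}\right) ^{p}>1$ holds for all $x\in(0,\infty)$ if and only if $p>0$ or $p\leq -\frac{4}{5}$. *)

From Stdlib Require Export Reals.

(* With a = sinh x / x, c = cosh x and q = -p, the inequality reads a^q < (2 + c^q) / 3.
   For q < 0 this follows from Lazarevic's inequality c^(1/3) < a and the AM-GM inequality;
   for q >= 4/5 it follows from the case q = 4/5, a < M(c) := ((2 + c^q)/3)^(1/q), by
   monotonicity of power means.  That case, and its failure near x = 0 when 0 < q < 4/5, come
   from comparing the derivative of sinh x / M(cosh x) with 1: its logarithm, as a function of c,
   vanishes at c = 1 and has the sign of a function N(c) with N(1) = 0 and N'(1) = 4 - 5q. *)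

From Stdlib Require Import Reals Lra Psatz.
From Coquelicot Require Import Coquelicot.
Open Scope R_scope.

Lemma lt_of_is_derive_pos (f f' : R -> R) a b : a < b ->
  (forall c, a <= c <= b -> is_derive f c (f' c)) ->
  (forall c, a < c < b -> 0 < f' c) -> f a < f b.
Proof.
  intros Hab Hd Hpos.
  destruct (MVT_cor2 f f' a b Hab) as [c [Hdiff Hc]].
  - intros c Hc. apply is_derive_Reals, Hd, Hc.
  - specialize (Hpos c Hc). nra.
Qed.

Lemma le_of_is_derive_nonneg (f f' : R -> R) a b : a <= b ->
  (forall c, a <= c <= b -> is_derive f c (f' c)) ->
  (forall c, a < c < b -> 0 <= f' c) -> f a <= f b.
Proof.
  intros [Hab | ->] Hd Hpos; [|lra].
  destruct (MVT_cor2 f f' a b Hab) as [c [Hdiff Hc]].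
  - intros c Hc. apply is_derive_Reals, Hd, Hc.
  - specialize (Hpos c Hc). nra.
Qed.

Lemma Rpower_pos x y : 0 < Rpower x y.
Proof. apply exp_pos. Qed.

Lemma Rpower_1_l y : Rpower 1 y = 1.
Proof. unfold Rpower. rewrite ln_1, Rmult_0_r. apply exp_0. Qed.

Lemma Rpower_inv_pow n c : (0 < n)%nat -> 0 < c -> Rpower c (/ INR n) ^ n = c.
Proof.
  intros Hn Hc. rewrite <- Rpower_pow by apply Rpower_pos.
  rewrite Rpower_mult, Rinv_l by (apply not_0_INR; lia). now apply Rpower_1.
Qed.

Lemma Rpower_lt_l_neg a b q : q < 0 -> 0 < a < b -> Rpower b q < Rpower a q.
Proof.
  intros Hq Hab. replace q with (- - q) by ring. rewrite (Rpower_Ropp a), (Rpower_Ropp b).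
  apply Rinv_lt_contravar.
  - apply Rmult_lt_0_compat; apply Rpower_pos.
  - apply Rlt_Rpower_l; lra.
Qed.

Lemma Rpower_bernoulli r z : 1 <= r -> 0 < z -> 1 + r * (z - 1) <= Rpower z r.
Proof.
  intros Hr Hz.
  set (f y := Rpower y r - r * y).
  set (f' y := r * (Rpower y (r - 1) - 1)).
  assert (Hd : forall y, 0 < y -> is_derive f y (f' y)).
  { intros y Hy. unfold f'. replace (r * (Rpower y (r - 1) - 1))
      with (r * Rpower y (r - 1) - r * 1) by ring.
    apply (is_derive_minus (fun y => Rpower y r)).
    - now apply is_derive_Reals, derivable_pt_lim_power.
    - auto_derive; [easy | ring]. }
  assert (Hf1 : f 1 = 1 - r) by (unfold f; rewrite Rpower_1_l; ring).
  destruct (Rle_or_lt 1 z) as [Hz1 | Hz1].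
  - assert (f 1 <= f z); [|unfold f in *; lra].
    apply (le_of_is_derive_nonneg f f' 1 z Hz1); [intros c Hc; apply Hd; lra |].
    intros c Hc. apply Rmult_le_pos; [lra |].
    rewrite <- (Rpower_O c) at 2 by lra.
    assert (Rpower c 0 <= Rpower c (r - 1)) by (apply Rle_Rpower; lra). lra.
  - assert (- f z <= - f 1); [|unfold f in *; lra].
    apply (le_of_is_derive_nonneg (fun y => - f y) (fun y => - f' y) z 1); [lra | |].
    + intros c Hc. apply (is_derive_opp f), Hd. lra.
    + intros c Hc. unfold f'. rewrite <- (Rpower_1_l (r - 1)) at 2.
      assert (Rpower c (r - 1) <= Rpower 1 (r - 1)) by (apply Rle_Rpower_l; lra). nra.
Qed.

Lemma cbrt_le_mean_11 y : 0 < y -> Rpower y (/ 3) <= (2 + y) / 3.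
Proof.
  intros Hy. pose proof (Rpower_inv_pow 3 y ltac:(lia) Hy) as Hy3.
  rewrite INR_IZR_INZ in Hy3. simpl IZR in Hy3.
  set (t := Rpower y (/ 3)) in *.
  assert (0 < t) by apply Rpower_pos.
  assert (0 <= (t - 1) ^ 2 * (t + 2)) by (apply Rmult_le_pos; [apply pow2_ge_0 | lra]).
  rewrite <- Hy3. lra.
Qed.

Lemma Rpower_mean_11_le r y : 1 <= r -> 0 < y ->
  Rpower ((2 + y) / 3) r <= (2 + Rpower y r) / 3.
Proof.
  intros Hr Hy. set (m := (2 + y) / 3).
  assert (Hm : 0 < m) by (unfold m; lra).
  assert (Hinv : Rpower (/ m) r * Rpower m r = 1).
  { rewrite Rpower_mult_distr, Rinv_l by (try apply Rinv_0_lt_compat; lra).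
    apply Rpower_1_l. }
  assert (Hy_m : Rpower (y / m) r = Rpower y r * Rpower (/ m) r).
  { symmetry. apply Rpower_mult_distr; [lra | now apply Rinv_0_lt_compat]. }
  (* Bernoulli at the points 1/m and y/m, whose weighted mean is 1. *)
  pose proof (Rpower_bernoulli r (/ m) Hr ltac:(now apply Rinv_0_lt_compat)) as B1.
  pose proof (Rpower_bernoulli r (y / m) Hr ltac:(now apply Rdiv_lt_0_compat)) as B2.
  assert (Hsum : 2 / 3 * (/ m) + 1 / 3 * (y / m) = 1) by (unfold m; field; lra).
  assert (1 <= (2 + Rpower y r) / 3 * Rpower (/ m) r) by nra.
  pose proof (Rpower_pos m r). nra.
Qed.

(** * Comparing [sinh x / x] with a function of [cosh x] *)

Lemma sinh_pos x : 0 < x -> 0 < sinh x.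
Proof. intros Hx. rewrite <- sinh_0. now apply sinh_lt. Qed.

Lemma cosh_lt x y : 0 <= x < y -> cosh x < cosh y.
Proof.
  intros Hxy. apply (lt_of_is_derive_pos cosh sinh); [lra | |].
  - intros c _. apply is_derive_Reals, derivable_pt_lim_cosh.
  - intros c Hc. apply sinh_pos. lra.
Qed.

Lemma cosh_gt_1 x : 0 < x -> 1 < cosh x.
Proof. intros Hx. rewrite <- cosh_0. apply cosh_lt. lra. Qed.

Lemma cosh_ge_1 x : 0 <= x -> 1 <= cosh x.
Proof. intros [Hx | <-]; [left; now apply cosh_gt_1 | rewrite cosh_0; lra]. Qed.

Lemma cosh_ln k : 0 < k -> cosh (ln k) = (k + / k) / 2.
Proof. intros Hk. unfold cosh. now rewrite exp_Ropp, exp_ln. Qed.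

Lemma sinh_sq x : sinh x ^ 2 = cosh x ^ 2 - 1.
Proof.
  unfold sinh, cosh. rewrite exp_Ropp.
  assert (exp x <> 0) by apply exp_neq_0. field. assumption.
Qed.

(* The derivative of [x |-> sinh x / M (cosh x)], written as a function of [c = cosh x]. *)
Definition sinhc_slope (M M' : R -> R) (c : R) : R :=
  (c * M c - (c ^ 2 - 1) * M' c) / M c ^ 2.

Lemma is_derive_sinh_div_comp (M M' : R -> R) x :
  is_derive M (cosh x) (M' (cosh x)) -> M (cosh x) <> 0 ->
  is_derive (fun x => sinh x / M (cosh x)) x (sinhc_slope M M' (cosh x)).
Proof.
  intros HM HM0.
  replace (sinhc_slope M M' (cosh x))
    with ((cosh x * M (cosh x) - sinh x * (sinh x * M' (cosh x))) / M (cosh x) ^ 2).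
  - apply (is_derive_div sinh (fun x => M (cosh x))); [| | easy].
    + apply is_derive_Reals, derivable_pt_lim_sinh.
    + apply (is_derive_comp M cosh); [easy |].
      apply is_derive_Reals, derivable_pt_lim_cosh.
  - unfold sinhc_slope. rewrite <- sinh_sq. f_equal. ring.
Qed.

Section SinhcComparison.

Variables M M' : R -> R.
Hypothesis M_pos : forall c, 1 <= c -> 0 < M c.
Hypothesis M_derive : forall c, 1 <= c -> is_derive M c (M' c).

Lemma sinhc_lt_comp X : 0 < X ->
  (forall x, 0 < x < X -> sinhc_slope M M' (cosh x) < 1) ->
  sinh X / X < M (cosh X).
Proof.
  intros HX Hslope.
  set (f x := x - sinh x / M (cosh x)).
  assert (f 0 < f X).
  { apply (lt_of_is_derive_pos f (fun x => 1 - sinhc_slope M M' (cosh x))); [easy | |].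
    - intros x Hx. pose proof (cosh_ge_1 x ltac:(lra)).
      exact (is_derive_minus _ _ x _ _ (is_derive_id x)
        (is_derive_sinh_div_comp M M' x (M_derive _ H) (Rgt_not_eq _ _ (M_pos _ H)))).
    - intros x Hx. specialize (Hslope x Hx). lra. }
  pose proof (M_pos (cosh X) (cosh_ge_1 X ltac:(lra))).
  unfold f in *. rewrite sinh_0, Rdiv_0_l in *.
  apply Rlt_div_l; [lra |].
  replace (sinh X) with (sinh X / M (cosh X) * M (cosh X)) by (field; lra). nra.
Qed.

Lemma sinhc_gt_comp X : 0 < X ->
  (forall x, 0 < x < X -> 1 < sinhc_slope M M' (cosh x)) ->
  M (cosh X) < sinh X / X.
Proof.
  intros HX Hslope.
  set (f x := sinh x / M (cosh x) - x).
  assert (f 0 < f X).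
  { apply (lt_of_is_derive_pos f (fun x => sinhc_slope M M' (cosh x) - 1)); [easy | |].
    - intros x Hx. pose proof (cosh_ge_1 x ltac:(lra)).
      exact (is_derive_minus _ _ x _ _
        (is_derive_sinh_div_comp M M' x (M_derive _ H) (Rgt_not_eq _ _ (M_pos _ H)))
        (is_derive_id x)).
    - intros x Hx. specialize (Hslope x Hx). lra. }
  pose proof (M_pos (cosh X) (cosh_ge_1 X ltac:(lra))).
  unfold f in *. rewrite sinh_0, Rdiv_0_l in *.
  apply Rlt_div_r; [lra |].
  replace (sinh X) with (sinh X / M (cosh X) * M (cosh X)) by (field; lra). nra.
Qed.

End SinhcComparison.

Lemma lazarevic x : 0 < x -> Rpower (cosh x) (/ 3) < sinh x / x.
Proof.
  intros Hx.
  apply (sinhc_gt_comp (fun c => Rpower c (/ 3)) (fun c => / 3 * Rpower c (/ 3 - 1)));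
    [intros; apply Rpower_pos | intros c Hc; apply is_derive_Reals, derivable_pt_lim_power; lra
    | easy |].
  intros y Hy. pose proof (cosh_gt_1 y ltac:(lra)) as Hc.
  set (c := cosh y) in *.
  pose proof (Rpower_inv_pow 3 c ltac:(lia) ltac:(lra)) as Hc3.
  rewrite INR_IZR_INZ in Hc3. simpl IZR in Hc3.
  assert (Hc' : Rpower c (/ 3 - 1) = Rpower c (/ 3) / c).
  { unfold Rminus. rewrite Rpower_plus, Rpower_Ropp, Rpower_1; [easy | lra]. }
  unfold sinhc_slope. rewrite Hc'.
  set (t := Rpower c (/ 3)) in *.
  assert (Ht : 1 < t).
  { unfold t. rewrite <- (Rpower_O c) at 1 by lra. apply Rpower_lt; lra. }
  rewrite <- Hc3.
  replace ((t ^ 3 * t - ((t ^ 3) ^ 2 - 1) * (/ 3 * (t / t ^ 3))) / t ^ 2)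
    with (1 + (t ^ 2 - 1) ^ 2 * (2 * t ^ 2 + 1) / (3 * t ^ 4)) by (field; lra).
  assert (0 < (t ^ 2 - 1) ^ 2 * (2 * t ^ 2 + 1) / (3 * t ^ 4)); [|lra].
  assert (0 < t ^ 2 - 1) by nra.
  apply Rdiv_lt_0_compat; [apply Rmult_lt_0_compat; [apply pow_lt |] |]; nra.
Qed.

(** * The power mean of order [q] of [1, 1, c] *)

Definition power_mean_11 (q c : R) : R := Rpower ((2 + Rpower c q) / 3) (/ q).

Definition power_mean_11' (q c : R) : R :=
  power_mean_11 q c * Rpower c q / (c * (2 + Rpower c q)).

Definition mean_slope (q c : R) : R :=
  (2 * c ^ 2 + Rpower c q) / (c * (2 + Rpower c q) * power_mean_11 q c).

Definition mean_slope_numer (q c : R) : R :=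
  2 * c ^ 2 + (q - 1) * Rpower c q - q * c ^ 2 * Rpower c q - Rpower c q ^ 2.

Lemma is_derive_power_mean_11 q c : q <> 0 -> 0 < c ->
  is_derive (power_mean_11 q) c (power_mean_11' q c).
Proof.
  intros Hq Hc. unfold power_mean_11', power_mean_11, Rpower.
  assert (0 < exp (q * ln c)) by apply exp_pos.
  auto_derive.
  - lra.
  - unfold Rdiv. set (e := exp (q * ln c)) in *. field. lra.
Qed.

Lemma sinhc_slope_power_mean_11 q c : 0 < c ->
  sinhc_slope (power_mean_11 q) (power_mean_11' q) c = mean_slope q c.
Proof.
  intros Hc. unfold sinhc_slope, power_mean_11', mean_slope.
  pose proof (Rpower_pos c q). pose proof (Rpower_pos ((2 + Rpower c q) / 3) (/ q)).
  fold (power_mean_11 q c) in *.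
  field. repeat split; lra.
Qed.

Lemma mean_slope_pos q c : 0 < c -> 0 < mean_slope q c.
Proof.
  intros Hc. pose proof (Rpower_pos c q). pose proof (Rpower_pos ((2 + Rpower c q) / 3) (/ q)).
  apply Rdiv_lt_0_compat; [nra |].
  apply Rmult_lt_0_compat; [nra | easy].
Qed.

Lemma mean_slope_1 q : mean_slope q 1 = 1.
Proof.
  unfold mean_slope, power_mean_11. rewrite !Rpower_1_l.
  replace ((2 + 1) / 3) with 1 by field. rewrite Rpower_1_l. field.
Qed.

Lemma is_derive_ln_mean_slope q c : q <> 0 -> 0 < c ->
  is_derive (fun c => ln (mean_slope q c)) c
    (2 * mean_slope_numer q c / (c * (2 * c ^ 2 + Rpower c q) * (2 + Rpower c q))).
Proof.
  intros Hq Hc. unfold mean_slope, mean_slope_numer, power_mean_11, Rpower.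
  auto_derive; unfold Rdiv in *;
    set (e := exp (q * ln c)); set (w := exp (/ q * ln ((2 + e) * / 3)));
    assert (He : 0 < e) by apply exp_pos; assert (Hw : 0 < w) by apply exp_pos;
    assert (0 < c * (2 + e) * w) by (apply Rmult_lt_0_compat; nra).
  - repeat split; try lra. apply Rmult_lt_0_compat; [nra | now apply Rinv_0_lt_compat].
  - field. repeat split; try lra; nra.
Qed.

Lemma mean_slope_numer_4_5_neg c : 1 < c -> mean_slope_numer (4 / 5) c < 0.
Proof.
  intros Hc. pose proof (Rpower_inv_pow 5 c ltac:(lia) ltac:(lra)) as Hc5.
  rewrite INR_IZR_INZ in Hc5. simpl IZR in Hc5.
  assert (Hc4 : Rpower c (4 / 5) = Rpower c (/ 5) ^ 4).
  { rewrite <- Rpower_pow, Rpower_mult by apply Rpower_pos. f_equal. simpl. field. }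
  unfold mean_slope_numer. rewrite Hc4.
  set (t := Rpower c (/ 5)) in *. rewrite <- Hc5.
  assert (Ht : 1 < t).
  { unfold t. rewrite <- (Rpower_O c) at 1 by lra. apply Rpower_lt; lra. }
  set (z := t ^ 2).
  assert (Hz : 1 < z) by (unfold z; nra).
  replace (2 * (t ^ 5) ^ 2 + (4 / 5 - 1) * t ^ 4 - 4 / 5 * (t ^ 5) ^ 2 * t ^ 4 - (t ^ 4) ^ 2)
    with (- (z ^ 2 / 5 * ((z - 1) ^ 2 * (4 * z ^ 3 + 8 * z ^ 2 + 2 * z + 1))))
    by (unfold z; field).
  apply Ropp_lt_gt_0_contravar.
  apply Rmult_lt_0_compat; [nra |].
  apply Rmult_lt_0_compat; [apply pow_lt |]; nra.
Qed.

Lemma Rpower_between_1_and_base q c : 0 <= q <= 1 -> 1 <= c -> 1 <= Rpower c q <= c.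
Proof.
  intros Hq Hc. split.
  - rewrite <- (Rpower_O c) by lra. apply Rle_Rpower; lra.
  - rewrite <- (Rpower_1 c) at 2 by lra. apply Rle_Rpower; lra.
Qed.

Lemma mean_slope_numer_pos q c : 0 < q < 4 / 5 -> 1 < c ->
  q * (2 + q) * c < 4 - 3 * q + q ^ 2 -> 0 < mean_slope_numer q c.
Proof.
  intros Hq Hc Hck. replace 0 with (mean_slope_numer q 1)
    by (unfold mean_slope_numer; rewrite Rpower_1_l; ring).
  apply (lt_of_is_derive_pos (mean_slope_numer q) (fun d =>
    (4 * d ^ 2 + q * (q - 1) * Rpower d q - (2 * q + q ^ 2) * d ^ 2 * Rpower d q
     - 2 * q * Rpower d q ^ 2) / d)); [easy | |].
  - intros d Hd. unfold mean_slope_numer, Rpower.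
    auto_derive; [lra | field; lra].
  - intros d Hd. apply Rdiv_lt_0_compat; [| lra].
    destruct (Rpower_between_1_and_base q d) as [He1 He2]; [lra | lra |].
    (* Every occurrence of [d ^ q] has a nonpositive coefficient, so it may be replaced by [d]. *)
    assert (Hb : 0 < 4 - 2 * q - q * (1 - q) - q * (2 + q) * d) by nra.
    set (e := Rpower d q) in *.
    assert (q * (1 - q) * e <= q * (1 - q) * d ^ 2) by (apply Rmult_le_compat_l; nra).
    assert (q * (2 + q) * d ^ 2 * e <= q * (2 + q) * d ^ 2 * d) by (apply Rmult_le_compat_l; nra).
    assert (2 * q * e ^ 2 <= 2 * q * d ^ 2) by (apply Rmult_le_compat_l; nra).
    assert (0 < d ^ 2 * (4 - 2 * q - q * (1 - q) - q * (2 + q) * d))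
      by (apply Rmult_lt_0_compat; nra).
    nra.
Qed.

Lemma mean_slope_4_5_lt_1 c : 1 < c -> mean_slope (4 / 5) c < 1.
Proof.
  intros Hc. rewrite <- (mean_slope_1 (4 / 5)).
  apply ln_lt_inv; [apply mean_slope_pos; lra | apply mean_slope_pos; lra |].
  apply Ropp_lt_cancel.
  apply (lt_of_is_derive_pos (fun c => - ln (mean_slope (4 / 5) c)) (fun c =>
    - (2 * mean_slope_numer (4 / 5) c
       / (c * (2 * c ^ 2 + Rpower c (4 / 5)) * (2 + Rpower c (4 / 5))))));
    [easy | |].
  - intros d Hd. apply (is_derive_opp (fun c => ln (mean_slope (4 / 5) c))).
    apply is_derive_ln_mean_slope; lra.
  - intros d Hd. pose proof (Rpower_pos d (4 / 5)).
    pose proof (mean_slope_numer_4_5_neg d ltac:(lra)).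
    apply Ropp_0_gt_lt_contravar, Rdiv_neg_pos; [lra |].
    apply Rmult_lt_0_compat; [apply Rmult_lt_0_compat |]; nra.
Qed.

Lemma mean_slope_gt_1 q c : 0 < q < 4 / 5 -> 1 < c ->
  q * (2 + q) * c < 4 - 3 * q + q ^ 2 -> 1 < mean_slope q c.
Proof.
  intros Hq Hc Hck. rewrite <- (mean_slope_1 q).
  apply ln_lt_inv; [apply mean_slope_pos; lra | apply mean_slope_pos; lra |].
  apply (lt_of_is_derive_pos (fun c => ln (mean_slope q c)) (fun c =>
    2 * mean_slope_numer q c / (c * (2 * c ^ 2 + Rpower c q) * (2 + Rpower c q))));
    [easy | |].
  - intros d Hd. apply is_derive_ln_mean_slope; lra.
  - intros d Hd. pose proof (Rpower_pos d q).
    assert (0 < mean_slope_numer q d) by (apply mean_slope_numer_pos; nra).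
    apply Rdiv_lt_0_compat; [lra |].
    apply Rmult_lt_0_compat; [apply Rmult_lt_0_compat |]; nra.
Qed.

Lemma power_mean_11_pos q c : 0 < power_mean_11 q c.
Proof. apply Rpower_pos. Qed.

Lemma sinhc_lt_power_mean_11 x : 0 < x -> sinh x / x < power_mean_11 (4 / 5) (cosh x).
Proof.
  intros Hx. apply (sinhc_lt_comp _ (power_mean_11' (4 / 5)));
    [intros; apply power_mean_11_pos | intros c Hc; apply is_derive_power_mean_11; lra
    | easy |].
  intros y Hy. pose proof (cosh_gt_1 y ltac:(lra)).
  rewrite sinhc_slope_power_mean_11 by lra. now apply mean_slope_4_5_lt_1.
Qed.

Lemma power_mean_11_lt_sinhc q : 0 < q < 4 / 5 ->
  exists x, 0 < x /\ power_mean_11 q (cosh x) < sinh x / x.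
Proof.
  intros Hq.
  (* Below [k], [mean_slope_numer q] is positive. *)
  set (k := (4 - 3 * q + q ^ 2) / (q * (2 + q))).
  assert (Hk : 1 < k).
  { unfold k. apply Rlt_div_r; nra. }
  exists (ln k). split; [rewrite <- ln_1; apply ln_increasing; lra |].
  apply (sinhc_gt_comp _ (power_mean_11' q));
    [intros; apply power_mean_11_pos | intros c Hc; apply is_derive_power_mean_11; lra
    | rewrite <- ln_1; apply ln_increasing; lra |].
  intros y Hy. pose proof (cosh_gt_1 y ltac:(lra)).
  assert (Hyk : cosh y < k).
  { apply (Rlt_trans _ (cosh (ln k))); [apply cosh_lt; lra |].
    rewrite cosh_ln by lra.
    assert (/ k < 1) by (rewrite <- Rinv_1; apply Rinv_lt_contravar; lra). lra. }
  rewrite sinhc_slope_power_mean_11 by lra. apply mean_slope_gt_1; [easy | easy |].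
  unfold k in Hyk. apply Rlt_div_r in Hyk; nra.
Qed.

(** * The inequality in terms of [q = - p] *)

Lemma sinhc_pow_lt_mean_neg q x : q < 0 -> 0 < x ->
  Rpower (sinh x / x) q < (2 + Rpower (cosh x) q) / 3.
Proof.
  intros Hq Hx.
  apply (Rlt_le_trans _ (Rpower (Rpower (cosh x) (/ 3)) q)).
  - apply Rpower_lt_l_neg; [easy |]. split; [apply Rpower_pos | now apply lazarevic].
  - rewrite !Rpower_mult, Rmult_comm, <- Rpower_mult.
    apply cbrt_le_mean_11, Rpower_pos.
Qed.

Lemma sinhc_pow_lt_mean_ge q x : 4 / 5 <= q -> 0 < x ->
  Rpower (sinh x / x) q < (2 + Rpower (cosh x) q) / 3.
Proof.
  intros Hq Hx. pose proof (sinh_pos x Hx).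
  apply (Rlt_le_trans _ (Rpower (power_mean_11 (4 / 5) (cosh x)) q)).
  - apply Rlt_Rpower_l; [lra |]. split; [now apply Rdiv_lt_0_compat |].
    now apply sinhc_lt_power_mean_11.
  - unfold power_mean_11. rewrite Rpower_mult.
    replace (Rpower (cosh x) q) with (Rpower (Rpower (cosh x) (4 / 5)) (/ (4 / 5) * q))
      by (rewrite Rpower_mult; f_equal; field).
    apply Rpower_mean_11_le; [lra | apply Rpower_pos].
Qed.

Lemma sinhc_pow_gt_mean q : 0 < q < 4 / 5 ->
  exists x, 0 < x /\ (2 + Rpower (cosh x) q) / 3 < Rpower (sinh x / x) q.
Proof.
  intros Hq. destruct (power_mean_11_lt_sinhc q Hq) as [x [Hx Hlt]].
  exists x. split; [easy |].
  replace ((2 + Rpower (cosh x) q) / 3) with (Rpower (power_mean_11 q (cosh x)) q).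
  - apply Rlt_Rpower_l; [lra |]. split; [apply power_mean_11_pos | easy].
  - pose proof (Rpower_pos (cosh x) q).
    unfold power_mean_11. rewrite Rpower_mult, Rinv_l, Rpower_1 by lra. easy.
Qed.

Lemma sinhc_tanhc_mean_gt_1_iff p x : 0 < x ->
  2 / 3 * Rpower (sinh x / x) p + 1 / 3 * Rpower (tanh x / x) p > 1 <->
  Rpower (sinh x / x) (- p) < (2 + Rpower (cosh x) (- p)) / 3.
Proof.
  intros Hx. pose proof (sinh_pos x Hx). pose proof (cosh_gt_1 x Hx).
  assert (Ha : 0 < sinh x / x) by (now apply Rdiv_lt_0_compat).
  replace (tanh x / x) with (sinh x / x * / cosh x) by (unfold tanh; field; lra).
  rewrite <- Rpower_mult_distr by (try apply Rinv_0_lt_compat; lra).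
  replace (Rpower (/ cosh x) p) with (Rpower (cosh x) (- p)).
  2: { rewrite Rpower_Ropp. unfold Rpower. rewrite ln_Rinv by lra.
       rewrite <- exp_Ropp. f_equal. ring. }
  rewrite (Rpower_Ropp (sinh x / x)).
  pose proof (Rpower_pos (sinh x / x) p).
  pose proof (Rpower_pos (cosh x) (- p)).
  replace (2 / 3 * Rpower (sinh x / x) p
           + 1 / 3 * (Rpower (sinh x / x) p * Rpower (cosh x) (- p)))
    with (Rpower (sinh x / x) p * ((2 + Rpower (cosh x) (- p)) / 3)) by field.
  set (A := Rpower (sinh x / x) p) in *.
  split; intros Hlt.
  - apply (Rmult_lt_reg_l A); [easy |]. rewrite Rinv_r; lra.
  - apply (Rmult_lt_compat_l A) in Hlt; [| easy]. rewrite Rinv_r in Hlt; lra.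
Qed.

Theorem proposition4p3 (p : R) (hp : p <> 0) :
  (forall x : R, 0 < x ->
     2 / 3 * Rpower (sinh x / x) p + 1 / 3 * Rpower (tanh x / x) p > 1)
  <-> (p > 0 \/ p <= - (4 / 5)).
Proof.
  split.
  - intros Hgt. destruct (Rlt_or_le 0 p) as [Hp | Hp]; [now left |].
    destruct (Rle_or_lt p (- (4 / 5))) as [Hp' | Hp']; [now right |].
    destruct (sinhc_pow_gt_mean (- p)) as [x [Hx Hfail]]; [lra |].
    pose proof (proj1 (sinhc_tanhc_mean_gt_1_iff p x Hx) (Hgt x Hx)). lra.
  - intros Hrange x Hx. apply sinhc_tanhc_mean_gt_1_iff; [easy |].
    destruct Hrange as [Hpos | Hneg];
      [apply sinhc_pow_lt_mean_neg | apply sinhc_pow_lt_mean_ge]; lra.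
Qed.
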